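(* Let $\Phi=(V,C)$ be a $k$-uniform CNF formula such that each variable belongs to at most $d$ clauses, and let $\mu$ be the uniform distribution over its satisfying assignments. Let $k_\alpha,k_\beta\ge1$ be integers with $k_\alpha+k_\beta\le k$, and let $\mathcal{M}\subseteq V$ be such that every clause contains at least $k_\alpha$ variables of $\mathcal{M}$ and at least $k_\beta$ variables of $V\setminus\mathcal{M}$. If $2^{k_\beta}\ge 4\mathrm{e}dk$, then the support of the marginal distribution $\mu_{\mathcal{M}}$ is all of $\{0,1\}^{\mathcal{M}}$, and the Glauber dynamics $P_{\mathsf{Glauber}}$ on $\{0,1\}^{\mathcal{M}}$ has the unique stationary distribution $\mu_{\mathcal{M}}$.
   Context: A CNF formula is $k$-uniform if every clause contains exactly $k$ literals on distinct variables (never both $x$ and $\neg x$). $\mu_{\mathcal{M}}$ is the marginal of $\mu$ on $\mathcal{M}$ and $\mu_v(\cdot\mid\sigma)$ is the marginal of $\mu$ on variable $v$ conditioned on a partial assignment $\sigma$. The Glauber dynamics $P_{\mathsf{Glauber}}$: from state $X\in\{0,1\}^{\mathcal{M}}$, pick $v\in\mathcal{M}$ uniformly at random, keep $X(u)$ for $u\in\mathcal{M}\setminus\{v\}$, and resample $X(v)$ from $\mu_v(\cdot\mid X(\mathcal{M}\setminus\{v\}))$. *)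

From HB Require Import structures.
From mathcomp Require Import all_boot all_order all_algebra.
From mathcomp Require Import reals sequences exp.
Set Implicit Arguments. Unset Strict Implicit. Unset Printing Implicit Defensive.
Import Order.TTheory GRing.Theory Num.Theory.
Local Open Scope ring_scope.

Section CNF.
Variables (V : finType) (I : finType).
(* A literal (v, b) is satisfied by x iff x v = b; a clause is a set of literals;
   a CNF formula is a family of clauses indexed by the finite type I. *)
Variable C : I -> {set (V * bool)}.

Definition vbl (c : {set (V * bool)}) : {set V} := [set l.1 | l in c].

Definition clause_sat (x : V -> bool) (c : {set (V * bool)}) : bool :=
  [exists l in c, x l.1 == l.2].

Definition k_uniform (k : nat) : Prop :=
  forall i, #|C i| = k /\ #|vbl (C i)| = k.

Definition max_degree_le (d : nat) : Prop :=
  forall v : V, (#|[set i | v \in vbl (C i)]| <= d)%N.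

Definition sat (x : {ffun V -> bool}) : bool := [forall i, clause_sat x (C i)].

Definition agree_on (S : {set V}) (x y : V -> bool) : bool :=
  [forall v in S, x v == y v].

Definition count_sat (S : {set V}) (sigma : V -> bool) : nat :=
  #|[set x : {ffun V -> bool} | sat x && agree_on S x sigma]|.

Variable R : realType.

(* mu = uniform distribution on satisfying assignments;
   mu_v(b | sigma on S) = Pr_mu[x v = b | x agrees with sigma on S] *)
Definition cond_marg (S : {set V}) (sigma : V -> bool) (v : V) (b : bool) : R :=
  (#|[set x : {ffun V -> bool} | [&& sat x, agree_on S x sigma & x v == b]]|)%:R
  / (count_sat S sigma)%:R.

Variable M : {set V}.
Definition Mvar := {v : V | v \in M}.
Definition Mconf := {ffun Mvar -> bool}.

(* extension of a configuration on M to V (values outside M irrelevant) *)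
Definition ext (X : Mconf) : V -> bool :=
  fun v => match insub v with Some u => X u | None => false end.

Definition muM (X : Mconf) : R :=
  (count_sat M (ext X))%:R / (count_sat set0 (fun _ => false))%:R.

(* Glauber dynamics on {0,1}^M.  Convention: if M is empty the state space is a
   single point and the chain is the identity. *)
Definition glauber (X Y : Mconf) : R :=
  if M == set0 then (X == Y)%:R else
  (#|M|%:R)^-1 * \sum_(u : Mvar)
     (if [forall w : Mvar, (w != u) ==> (X w == Y w)]
      then cond_marg (M :\ val u) (ext X) (val u) (Y u) else 0).

End CNF.

Definition is_stationary (S : finType) (R : realType) (P : S -> S -> R) (pi : S -> R) : Prop :=
  (forall s, 0 <= pi s) /\ \sum_(s : S) pi s = 1 /\
  (forall t, \sum_(s : S) pi s * P s t = pi t).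

(* Fix any configuration sigma on M.  Each clause has at least kb free variables
   (outside M), and resampling them turns every assignment that violates the
   clause into 2^kb assignments, all consistent with sigma and with the clauses
   not touching those variables.  An induction over sets of clauses in the style
   of the local lemma then shows that imposing one more clause loses at most a
   2/2^kb <= 1/2 fraction of the extensions of sigma, so sigma extends to a
   satisfying assignment: mu_M has full support.  The Glauber dynamics is
   reversible for mu_M, and full support makes every single-site update have
   positive probability, so the chain is irreducible and its stationary
   distribution is unique (compare any stationary pi with the largest multiple
   of mu_M below it). *)

From mathcomp Require Import all_boot all_order all_algebra.
From mathcomp Require Import reals sequences exp.
From mathcomp Require Import zify lra.
Set Implicit Arguments. Unset Strict Implicit. Unset Printing Implicit Defensive.
Import Order.TTheory GRing.Theory Num.Theory.

Lemma card_set_sum (T : finType) (A : {set T}) : #|A| = \sum_(x : T) (x \in A : nat).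
Proof. by rewrite -sum1_card big_mkcond /=; apply: eq_bigr => x _; case: (x \in A). Qed.

Section PartialAssignmentExtends.
Variables (V I : finType) (C : I -> {set (V * bool)}) (M : {set V}) (sigma : V -> bool).

Definition sols (S : {set I}) : {set {ffun V -> bool}} :=
  [set x : {ffun V -> bool} | [forall j in S, clause_sat x (C j)] && agree_on M x sigma].

Definition sols_viol (i : I) (S : {set I}) : {set {ffun V -> bool}} :=
  sols S :\: [set x : {ffun V -> bool} | clause_sat x (C i)].

Definition free_vbl (i : I) : {set V} := vbl (C i) :\: M.

Lemma violated_eq_on (c : {set (V * bool)}) (x y : V -> bool) v :
  ~~ clause_sat x c -> ~~ clause_sat y c -> v \in vbl c -> x v = y v.
Proof.
rewrite /clause_sat !negb_exists => /forallP hx /forallP hy /imsetP[l lc ->].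
by move: (hx l) (hy l); rewrite lc /=; case: (x l.1); case: (y l.1); case: (l.2).
Qed.

Definition resample (i : I) (x : {ffun V -> bool}) (W : {set V}) : {ffun V -> bool} :=
  [ffun v => if v \in free_vbl i then v \in W else x v].

Lemma resample_inj i (S : {set I}) :
  {in setX (sols_viol i S) (powerset (free_vbl i)) &,
   injective (fun p => resample i p.1 p.2)}.
Proof.
move=> [x W] [y W']; rewrite !inE /= => /andP[/and3P[vx _ _] sW] /andP[/and3P[vy _ _] sW'] E.
have {}E v : resample i x W v = resample i y W' v by rewrite E.
congr pair; [apply/ffunP => v | apply/setP => v]; move: (E v); rewrite !ffunE.
- case: ifP => // /setDP[vi _] _; exact: violated_eq_on vx vy vi.
- case: ifP => [//| /negbT vi _].
  by rewrite (contraNF (subsetP sW v) vi) (contraNF (subsetP sW' v) vi).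
Qed.

Lemma resample_sols i (S : {set I}) x W :
  (forall j, j \in S -> [disjoint vbl (C j) & free_vbl i]) ->
  x \in sols S -> resample i x W \in sols S.
Proof.
move=> dis; rewrite !inE => /andP[/forallP xS /forallP xM]; apply/andP; split.
  apply/forallP => j; apply/implyP => jS; move/implyP: (xS j) => /(_ jS) /existsP[l /andP[lC xl]].
  apply/existsP; exists l; rewrite lC ffunE.
  by rewrite (disjointFr (dis j jS)) //; apply/imsetP; exists l.
apply/forallP => v; apply/implyP => vM; move/implyP: (xM v) => /(_ vM).
by rewrite ffunE inE vM.
Qed.

Lemma card_sols_viol_indep i (S : {set I}) :
  (forall j, j \in S -> [disjoint vbl (C j) & free_vbl i]) ->
  2 ^ #|free_vbl i| * #|sols_viol i S| <= #|sols S|.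
Proof.
move=> dis.
have -> : 2 ^ #|free_vbl i| * #|sols_viol i S| =
          #|[set resample i p.1 p.2 | p in setX (sols_viol i S) (powerset (free_vbl i))]|.
  by rewrite card_in_imset ?cardsX ?card_powerset 1?mulnC //; apply: resample_inj.
apply/subset_leq_card/subsetP => _ /imsetP[[x W] /setXP[xS _] ->].
by apply: resample_sols dis _; move: xS => /setDP[].
Qed.

Lemma subset_sols (S S' : {set I}) : S' \subset S -> sols S \subset sols S'.
Proof.
move=> sS'S; apply/subsetP => x; rewrite !inE => /andP[/forallP xS ->]; rewrite andbT.
by apply/forallP => j; apply/implyP => /(subsetP sS'S) jS; exact: implyP (xS j) jS.
Qed.

Lemma card_sols_split i (S : {set I}) : #|sols S| = #|sols (i |: S)| + #|sols_viol i S|.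
Proof.
set B := [set x : {ffun V -> bool} | clause_sat x (C i)].
have -> : sols (i |: S) = sols S :&: B.
  apply/setP => x; rewrite !inE andbAC; congr andb; apply/forallP/andP => [H|[/forallP H xi] j].
    split; last by move: (H i); rewrite setU11.
    by apply/forallP => j; apply/implyP => jS; move: (H j); rewrite inE jS orbT.
  by rewrite !inE; case: (eqVneq j i) => [-> //|_]; exact: H.
by rewrite cardsID.
Qed.

Lemma card_sols_diff_le (S S1 : {set I}) : S1 \subset S ->
  #|sols (S :\: S1)| <= #|sols S| + \sum_(j in S1) #|sols_viol j (S :\: S1)|.
Proof.
move=> sS1S; rewrite !card_set_sum (eq_bigr _ (fun j _ => card_set_sum (sols_viol j _))).
rewrite exchange_big -big_split /=; apply: leq_sum => x _.
case: (boolP (x \in sols S)) => [_|xNS]; first exact: leq_trans (leq_b1 _) (leq_addr _ _).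
case: (boolP (x \in sols (S :\: S1))) => [xS2|_] //=.
have [j jS1 xj] : exists2 j, j \in S1 & ~~ clause_sat x (C j).
  move: xS2 xNS; rewrite !inE => /andP[/forallP xS2 ->]; rewrite andbT negb_forall.
  case/existsP => j; rewrite negb_imply => /andP[jS xj]; exists j => //.
  by apply: contraNT xj => jS1; move: (xS2 j); rewrite !inE jS1 jS.
by rewrite (bigD1 j) //= in_setD xS2 inE xj.
Qed.

Variables (k d kb : nat).
Hypothesis deg_le : max_degree_le C d.
Hypothesis vbl_le : forall i, #|vbl (C i)| <= k.
Hypothesis free_ge : forall i, kb <= #|free_vbl i|.
Hypothesis kb_gt0 : 0 < kb.
Hypothesis pow_ge : 4 * k * d <= 2 ^ kb.

Definition dep_clauses i (S : {set I}) : {set I} :=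
  [set j in S | ~~ [disjoint vbl (C j) & free_vbl i]].

Lemma card_dep_clauses_le i S : #|dep_clauses i S| <= k * d.
Proof.
have free_le : #|free_vbl i| <= k := leq_trans (subset_leq_card (subsetDl _ _)) (vbl_le i).
apply: (@leq_trans (\sum_(v in free_vbl i) #|[set j | v \in vbl (C j)]|)); last first.
  apply: leq_trans (leq_mul free_le (leqnn d)); rewrite -sum_nat_const.
  by apply: leq_sum => v _; exact: deg_le.
rewrite card_set_sum (eq_bigr _ (fun v _ => card_set_sum [set j | v \in vbl (C j)])).
rewrite exchange_big /=; apply: leq_sum => j _; rewrite inE.
case: (boolP (j \in S)) => //= _; case: (boolP [disjoint _ & _]) => //=.
rewrite -setI_eq0 => /set0Pn[v /setIP[vj vi]].
by rewrite (bigD1 v) //= inE vj.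
Qed.

Lemma card_sols_viol_le (S : {set I}) i : 2 ^ kb * #|sols_viol i S| <= 2 * #|sols S|.
Proof.
(* Drop the at most [k * d] clauses [S1] sharing a free variable with [i]: on
   [S2 := S :\: S1] violating [i] costs a factor [2 ^ kb], and by induction putting
   [S1] back loses at most half of [sols S2]. *)
elim: {S}_.+1 {-2}S (ltnSn #|S|) i => // n IHn S ltSn i.
set S1 := dep_clauses i S; set S2 := S :\: S1.
have sS1S : S1 \subset S by apply/subsetP => j; rewrite inE => /andP[].
have viol_i : 2 ^ kb * #|sols_viol i S| <= #|sols S2|.
  have indep j : j \in S2 -> [disjoint vbl (C j) & free_vbl i].
    by rewrite !inE => /andP[+ jS]; rewrite jS negbK.
  apply: leq_trans (card_sols_viol_indep indep); apply: leq_mul; first exact: leq_pexp2l.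
  by apply/subset_leq_card/setSD/subset_sols/subsetDl.
have viol_S1 : 2 ^ kb * \sum_(j in S1) #|sols_viol j S2| <= 2 * #|S1| * #|sols S2|.
  rewrite big_distrr [2 * _]mulnC -mulnA -sum_nat_const; apply: leq_sum => j jS1.
  have pS2 : S2 \proper S.
    rewrite properEneq subsetDl andbT; apply/eqP => /setP/(_ j).
    by rewrite inE jS1 (subsetP sS1S).
  by apply: IHn; move: (proper_card pS2) ltSn; lia.
have := card_dep_clauses_le i S; have := card_sols_diff_le sS1S; rewrite -/S1 -/S2.
move: viol_i viol_S1 pow_ge; nia.
Qed.

Lemma four_le_pow_kb (i : I) : 4 <= 2 ^ kb.
Proof.
have k_gt0 : 0 < k.
  apply: leq_trans (vbl_le i); apply: leq_trans (subset_leq_card (subsetDl _ M)).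
  exact: leq_trans (free_ge i).
have [v vi] : exists v, v \in free_vbl i by apply/card_gt0P; exact: leq_trans (free_ge i).
have d_gt0 : 0 < d.
  by apply: leq_trans (deg_le v); apply/card_gt0P; exists i; rewrite inE; case/setDP: vi.
by apply: leq_trans pow_ge; rewrite -mulnA leq_pmulr ?muln_gt0 ?k_gt0.
Qed.

Lemma sols_gt0 (S : {set I}) : 0 < #|sols S|.
Proof.
elim: {S}_.+1 {-2}S (ltnSn #|S|) => // n IHn S ltSn.
have [->|[i iS]] := set_0Vmem S.
  apply/card_gt0P; exists [ffun v => sigma v]; rewrite !inE.
  by apply/andP; split; apply/forallP => v; rewrite ?inE // ffunE eqxx implybT.
have := card_sols_split i (S :\ i); rewrite setD1K //.
have := card_sols_viol_le (S :\ i) i; have := four_le_pow_kb i.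
have := IHn (S :\ i); rewrite (cardsD1 i S) iS in ltSn; move/(_ ltSn).
nia.
Qed.

Lemma count_sat_gt0 : 0 < count_sat C M sigma.
Proof.
suff -> : count_sat C M sigma = #|sols [set: I]| by exact: sols_gt0.
apply: eq_card => x; rewrite !inE; congr andb.
by apply: eq_forallb => j; rewrite inE.
Qed.

End PartialAssignmentExtends.

Local Open Scope ring_scope.

Lemma four_dk_le_pow (R : realType) (d k n : nat) :
  4 * expR 1 * d%:R * k%:R <= 2 ^+ n :> R -> (4 * k * d <= 2 ^ n)%N.
Proof.
move=> bound; rewrite -(ler_nat R) natrX !natrM; apply: le_trans bound.
have e_ge1 : 1 <= expR 1 :> R by apply: le_trans (expR_ge1Dx 1); rewrite lerDl.
have := ler_wpM2r (mulr_ge0 (ler0n R d) (ler0n R k)) e_ge1.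
have -> : 4%:R = 4 :> R by [].
nra.
Qed.

Section FiniteMarkovChain.
Variables (R : realFieldType) (S : finType) (P : S -> S -> R).
Hypothesis P_ge0 : forall s t, 0 <= P s t.

Definition invariant (pi : S -> R) := forall t, \sum_s pi s * P s t = pi t.

Definition positive_step : rel S := [rel s t | 0 < P s t].

Lemma reversible_invariant (pi : S -> R) :
  (forall s, \sum_t P s t = 1) -> (forall s t, pi s * P s t = pi t * P t s) ->
  invariant pi.
Proof.
move=> rowP rev t; under eq_bigr => s _ do rewrite rev.
by rewrite -mulr_sumr rowP mulr1.
Qed.

Lemma invariant_eq0_connect (nu : S -> R) s t :
  (forall s, 0 <= nu s) -> invariant nu ->
  connect positive_step s t -> nu t = 0 -> nu s = 0.
Proof.
move=> nu_ge0 nu_st /connectP[p]; elim: p s => [s _ -> //|s' p IHp s] /=.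
case/andP=> Pss' /IHp/[apply]/[apply] nu_s'.
have /eqP := @psumr_eq0P _ _ predT _ (fun x _ => mulr_ge0 (nu_ge0 x) (P_ge0 x s'))
                           (etrans (nu_st s') nu_s') s isT.
by rewrite mulf_eq0 (gt_eqF Pss') orbF => /eqP.
Qed.

Lemma irreducible_stationary_unique (mu pi : S -> R) :
  (forall s t, connect positive_step s t) ->
  (forall s, 0 < mu s) -> invariant mu -> \sum_s mu s = 1 ->
  (forall s, 0 <= pi s) -> invariant pi -> \sum_s pi s = 1 ->
  pi =1 mu.
Proof.
move=> conn mu_gt0 mu_st mu_sum pi_ge0 pi_st pi_sum x.
have [s0 _ min_s0] := @arg_minP _ R S x predT (fun s => pi s / mu s) isT.
set a := pi s0 / mu s0.
pose nu s := pi s - a * mu s.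
have nu_ge0 s : 0 <= nu s by rewrite subr_ge0 -ler_pdivlMr ?min_s0.
have nu_st : invariant nu.
  move=> t; under eq_bigr => s _ do rewrite mulrBl -mulrA.
  by rewrite sumrB pi_st -mulr_sumr mu_st.
have nu_eq0 s : nu s = 0.
  by apply: invariant_eq0_connect nu_ge0 nu_st (conn s s0) _; rewrite /nu divfK ?subrr ?gt_eqF.
have pi_eq s : pi s = a * mu s by apply/eqP; rewrite -subr_eq0; apply/eqP/nu_eq0.
have a_eq1 : a = 1.
  by move: pi_sum; under eq_bigr do rewrite pi_eq; rewrite -mulr_sumr mu_sum mulr1.
by rewrite pi_eq a_eq1 mul1r.
Qed.

End FiniteMarkovChain.

Section Glauber.
Variables (R : realType) (V I : finType) (C : I -> {set (V * bool)}) (M : {set V}).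

Local Notation count X := (count_sat C M (ext X)).
Local Notation count_off X u := (count_sat C (M :\ val u) (ext X)).
Local Notation count_all := (count_sat C set0 (fun _ => false)).
Local Notation g := (glauber C R (M:=M)).
Local Notation mu := (muM C R (M:=M)).

Definition restrict (x : {ffun V -> bool}) : Mconf M := [ffun u => x (val u)].

Definition agree_off (s t : Mconf M) (u : Mvar M) : bool :=
  [forall w, (w != u) ==> (s w == t w)].

Definition upd (s : Mconf M) (u : Mvar M) (b : bool) : Mconf M :=
  [ffun w => if w == u then b else s w].

Lemma ext_val (X : Mconf M) (u : Mvar M) : ext X (val u) = X u.
Proof. by rewrite /ext valK. Qed.

Lemma agree_on_ext (x : {ffun V -> bool}) (X : Mconf M) :
  agree_on M x (ext X) = (restrict x == X).
Proof.
apply/forallP/eqP => [xX|<- v].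
  by apply/ffunP => u; rewrite ffunE -ext_val; apply/eqP/(implyP (xX (val u)))/valP.
by apply/implyP => vM; rewrite /ext insubT ffunE.
Qed.

Lemma agree_on_ext_off x (X : Mconf M) (u : Mvar M) :
  agree_on (M :\ val u) x (ext X) = [forall w, (w != u) ==> (x (val w) == X w)].
Proof.
apply/forallP/forallP => xX w; apply/implyP.
  by move=> wu; move/implyP: (xX (val w)); rewrite !inE (valP w) (inj_eq val_inj) wu ext_val; apply.
rewrite !inE => /andP[wu wM]; rewrite /ext insubT.
by move/implyP: (xX (Sub w wM)); rewrite -(inj_eq val_inj) SubK wu; apply.
Qed.

Lemma sum_count : (\sum_(X : Mconf M) count X)%N = count_all.
Proof.
rewrite /count_sat -sum1_card (partition_big restrict predT) //=.
apply: eq_bigr => X _; rewrite -sum1_card; apply: eq_bigl => x.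
rewrite !inE agree_on_ext; case: (sat C x) => //=.
by rewrite [agree_on _ _ _](_ : _ = true) //; apply/forallP => v; rewrite inE.
Qed.

Lemma upd_eq s t u b : (t == upd s u b) = agree_off s t u && (t u == b).
Proof.
apply/eqP/andP => [->|[/forallP st /eqP <-]].
  rewrite /upd ffunE eqxx; split=> //.
  by apply/forallP => w; apply/implyP => wu; rewrite ffunE (negbTE wu).
apply/ffunP => w; rewrite ffunE; case: (eqVneq w u) => [->//|wu].
by move/implyP: (st w) => /(_ wu) /eqP.
Qed.

Lemma agree_offC s t u : agree_off s t u = agree_off t s u.
Proof. by apply: eq_forallb => w; rewrite [s w == _]eq_sym. Qed.

Lemma agree_off_count s t u : agree_off s t u -> count_off s u = count_off t u.
Proof.
move=> /forallP st; apply: eq_card => x; rewrite !inE !agree_on_ext_off; congr andb.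
apply: eq_forallb => w; case: (eqVneq w u) => //= wu.
by move/implyP: (st w) => /(_ wu) /eqP ->.
Qed.

Lemma agree_off_card s t u : agree_off s t u ->
  #|[set x : {ffun V -> bool} | [&& sat C x, agree_on (M :\ val u) x (ext s) & x (val u) == t u]]|
  = count t.
Proof.
move=> /forallP st; apply: eq_card => x; rewrite !inE agree_on_ext_off agree_on_ext; congr andb.
apply/andP/eqP => [[/forallP xs /eqP xu]|xt].
  apply/ffunP => w; rewrite ffunE; case: (eqVneq w u) => [->//|wu].
  by move/implyP: (st w) (xs w) => /(_ wu) /eqP <- /implyP /(_ wu) /eqP.
rewrite -xt /restrict ffunE; split=> //; apply/forallP => w; apply/implyP => wu.
by move/implyP: (st w) => /(_ wu) /eqP ->; rewrite -xt ffunE.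
Qed.

Lemma leq_count_sat (S S' : {set V}) sigma :
  S \subset S' -> (count_sat C S' sigma <= count_sat C S sigma)%N.
Proof.
move=> sSS'; apply/subset_leq_card/subsetP => x; rewrite !inE => /andP[-> /forallP xS'].
by apply/forallP => v; apply/implyP => /(subsetP sSS') vS'; move/implyP: (xS' v); apply.
Qed.

Hypothesis count_gt0 : forall X : Mconf M, (0 < count X)%N.

Lemma count_off_gt0 (s : Mconf M) (u : Mvar M) : (0 < count_off s u)%N.
Proof. exact: leq_trans (count_gt0 s) (leq_count_sat _ (subsetDl _ _)). Qed.

Lemma count_all_gt0 : (0 < count_all)%N.
Proof. by rewrite -sum_count (bigD1 [ffun=> false]) //= ltn_addr. Qed.

Lemma cond_marg_agree_off s t u : agree_off s t u ->
  cond_marg C R (M :\ val u) (ext s) (val u) (t u) = (count t)%:R / (count_off s u)%:R.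
Proof. by move=> st; rewrite /cond_marg agree_off_card. Qed.

Lemma cond_marg_ge0 S sigma v b : 0 <= cond_marg C R S sigma v b.
Proof. by rewrite /cond_marg divr_ge0. Qed.

Lemma cond_marg_sum (s : Mconf M) (u : Mvar M) :
  \sum_b cond_marg C R (M :\ val u) (ext s) (val u) b = 1.
Proof.
rewrite /cond_marg -mulr_suml -natr_sum.
suff -> : (\sum_b #|[set x | [&& sat C x, agree_on (M :\ val u) x (ext s) & x (val u) == b]]|
           = count_off s u)%N by rewrite divff // pnatr_eq0 -lt0n count_off_gt0.
rewrite /count_sat -sum1_card [RHS](partition_big (fun x : {ffun V -> bool} => x (val u)) predT) //=.
by apply: eq_bigr => b _; rewrite -sum1_card; apply: eq_bigl => x; rewrite !inE andbA.
Qed.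

Lemma sum_agree_off (s : Mconf M) (u : Mvar M) (G : bool -> R) :
  \sum_t (if agree_off s t u then G (t u) else 0) = \sum_b G b.
Proof.
rewrite (eq_bigr (fun t => \sum_b (if t == upd s u b then G b else 0))).
  by rewrite exchange_big; apply: eq_bigr => b _; rewrite -big_mkcond big_pred1_eq.
move=> t _; rewrite big_bool /= !upd_eq; case: (agree_off s t u) => /=; last by rewrite addr0.
by case: (t u); rewrite /= ?addr0 ?add0r.
Qed.

Lemma glauberE s t : M != set0 ->
  g s t = #|M|%:R^-1 * \sum_u (if agree_off s t u
                               then cond_marg C R (M :\ val u) (ext s) (val u) (t u) else 0).
Proof. by move=> M_neq0; rewrite /glauber (negbTE M_neq0). Qed.

Lemma glauber_ge0 s t : 0 <= g s t.
Proof.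
rewrite /glauber; case: ifP => _ //.
by rewrite mulr_ge0 ?invr_ge0 // sumr_ge0 // => u _; case: ifP => // _; exact: cond_marg_ge0.
Qed.

Lemma glauber_row_sum s : \sum_t g s t = 1.
Proof.
have [M0|M_neq0] := boolP (M == set0).
  rewrite /glauber M0 (bigD1 s) //= eqxx big1 ?addr0 // => t.
  by rewrite eq_sym => /negbTE ->.
under eq_bigr do rewrite glauberE //.
rewrite -mulr_sumr exchange_big (eq_bigr (fun=> 1)) => [|u _]; last first.
  by rewrite -(cond_marg_sum s u) (sum_agree_off s u (cond_marg C R _ _ _)).
by rewrite sumr_const card_sig mulVf // pnatr_eq0 cards_eq0.
Qed.

Lemma glauber_reversible s t : mu s * g s t = mu t * g t s.
Proof.
have [M0|M_neq0] := boolP (M == set0).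
  by rewrite /glauber M0; case: (eqVneq s t) => [->|_]; rewrite ?mulr0.
rewrite !glauberE //.
set m := (#|M|%:R^-1 : R); set z := (count_all%:R : R).
have factor (x y : R) : x / z * (m * y) = x * y * (m / z).
  by rewrite [m * y]mulrC mulrACA [_^-1 * m]mulrC.
rewrite /muM !factor !mulr_sumr; congr (_ * _); apply: eq_bigr => u _.
rewrite agree_offC; case: ifP => [ts|_]; last by rewrite !mulr0.
have st : agree_off s t u by rewrite agree_offC.
by rewrite (cond_marg_agree_off st) (cond_marg_agree_off ts) (agree_off_count st) mulrCA.
Qed.

Lemma muM_gt0 X : 0 < mu X.
Proof. by rewrite divr_gt0 ?ltr0n ?count_gt0 ?count_all_gt0. Qed.

Lemma muM_sum : \sum_X mu X = 1.
Proof. by rewrite -mulr_suml -natr_sum sum_count divff // pnatr_eq0 -lt0n count_all_gt0. Qed.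

Lemma glauber_upd_gt0 s u b : 0 < g s (upd s u b).
Proof.
have M_neq0 : M != set0 by apply/set0Pn; exists (val u); exact: valP.
rewrite glauberE // mulr_gt0 ?invr_gt0 ?ltr0n ?card_gt0 // (bigD1 u) //=.
have /andP[agree _] : agree_off s (upd s u b) u && (upd s u b u == b) by rewrite -upd_eq.
rewrite agree ltr_wpDr ?sumr_ge0 // => [w _|]; first by case: ifP => // _; exact: cond_marg_ge0.
by rewrite cond_marg_agree_off // divr_gt0 ?ltr0n ?count_gt0 ?count_off_gt0.
Qed.

Lemma glauber_connect s t : connect (positive_step g) s t.
Proof.
elim: {s}_.+1 {-2}s (ltnSn #|[set w | s w != t w]|) => // n IHn s lt_n.
have [diff0|[w]] := set_0Vmem [set w | s w != t w].
  suff -> : s = t by exact: connect0.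
  by apply/ffunP => w; apply/eqP/negPn; move/setP: diff0 => /(_ w); rewrite !inE => /negbT.
rewrite inE => sw; set s' := upd s w (t w).
apply: connect_trans (connect1 (glauber_upd_gt0 s w (t w))) (IHn s' _).
have -> : [set w' | s' w' != t w'] = [set w' | s w' != t w'] :\ w.
  by apply/setP => w'; rewrite !inE ffunE; case: (eqVneq w' w) => [->|]; rewrite ?eqxx.
by move: lt_n; rewrite (cardsD1 w) inE sw.
Qed.

End Glauber.

Unset Implicit Arguments.

Theorem lemma4p2 (R : realType) (V I : finType) (C : I -> {set (V * bool)})
    (k d ka kb : nat) (M : {set V}) :
  k_uniform C k ->
  max_degree_le C d ->
  (1 <= ka)%N -> (1 <= kb)%N -> (ka + kb <= k)%N ->
  (forall i, (ka <= #|vbl (C i) :&: M|)%N /\ (kb <= #|vbl (C i) :\: M|)%N) ->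
  4 * expR 1 * d%:R * k%:R <= 2 ^+ kb :> R ->
  (forall X : Mconf M, 0 < muM C R X) /\
  (forall pi : Mconf M -> R,
     is_stationary (glauber C R (M:=M)) pi <-> (forall X, pi X = muM C R X)).
Proof.
move=> unif deg _ kb_gt0 _ split_vbl bound.
have vbl_le i : (#|vbl (C i)| <= k)%N by case: (unif i) => _ ->.
have free_ge i : (kb <= #|free_vbl C M i|)%N by case: (split_vbl i).
have count_gt0 (X : Mconf M) : (0 < count_sat C M (ext X))%N.
  exact: (count_sat_gt0 (ext X) deg vbl_le free_ge kb_gt0 (four_dk_le_pow bound)).
have mu_st : invariant (glauber C R (M:=M)) (muM C R (M:=M)).
  exact: reversible_invariant (glauber_row_sum R count_gt0) (glauber_reversible R C (M:=M)).
split=> [|pi]; first exact: muM_gt0.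
split=> [[pi_ge0 [pi_sum pi_st]]|pi_mu].
  exact: (irreducible_stationary_unique (glauber_ge0 R C (M:=M)) (glauber_connect R count_gt0)
           (muM_gt0 R count_gt0) mu_st (muM_sum R count_gt0) pi_ge0 pi_st pi_sum).
split; [|split].
- by move=> X; rewrite pi_mu; exact/ltW/muM_gt0.
- by under eq_bigr do rewrite pi_mu; exact: muM_sum.
- by move=> t; under eq_bigr do rewrite pi_mu; rewrite pi_mu; exact: mu_st.
Qed.
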